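(* Let either $t_i=i+\beta$ for $i\ge1$ with $\beta>-1$, and set $\rho(u)=\log u$; or $t_i=i^\alpha$ for $i\ge1$ with $0<\alpha<1$, and set $\rho(u)=u^{1/\alpha-1}$. Let $n(t)=\#\{k\ge1: t_k\le t\}$. There are constants $C>0$ and $D$, depending only on $\alpha$ or $\beta$, such that for all sufficiently large $M$, \[ u^3\int_0^{t_M}\frac{n(t)}{t^2(t^2+u^2+ut\sqrt2)}\,dt\ge C\,u\,\rho(\min(t_M,u)) \] whenever $u\ge D$. *)

From Stdlib Require Import Reals Lra List.
From Coquelicot Require Import Coquelicot.
Open Scope R_scope.

Definition count_le (s : nat -> R) (N : nat) (x : R) : nat :=
  length (filter (fun k => if Rle_dec (s k) x then true else false) (seq 1 N)).

(* n(x) = #{k >= 1 : s k <= x}, as the supremum of the finite truncated counts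
   (real part; the counts are finite for the sequences considered). *)
Definition ncount (s : nat -> R) (x : R) : R :=
  real (Sup_seq (fun N => Finite (INR (count_le s N x)))).

Definition lhs_integral (s : nat -> R) (M : nat) (u : R) : R :=
  u ^ 3 * RInt (fun t => ncount s t / (t ^ 2 * (t ^ 2 + u ^ 2 + u * t * sqrt 2))) 0 (s M).

From Stdlib Require Import Reals Lra Lia List.
From Coquelicot Require Import Coquelicot.
Open Scope R_scope.

(* For 0 < t <= u the denominator is at most 4 u^2 t^2, so the left-hand side is
   at least (u/4) times the integral of n(t)/t^2 over any subinterval of
   [0, min(t_M, u)].  For t_i = i + beta one has n(t) >= t/2 once t >= c, and
   integrating 1/(2t) over [c, m] gives (log m - log c)/2 >= (log m)/4 when m >= c^2.
   For t_i = i^alpha one has n(t) >= t^(1/alpha)/2, and on [m/2, m] this makes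
   n(t)/t^2 at least a constant multiple of m^(1/alpha - 2). *)

Lemma count_le_S s N x :
  count_le s (S N) x = (count_le s N x + if Rle_dec (s (S N)) x then 1 else 0)%nat.
Proof.
  unfold count_le. rewrite seq_S, filter_app, length_app. simpl.
  replace (1 + N)%nat with (S N) by lia.
  destruct (Rle_dec (s (S N)) x); simpl; lia.
Qed.

Lemma count_le_eq_min s x k :
  (forall j, (1 <= j)%nat -> s j <= x <-> (j <= k)%nat) ->
  forall N, count_le s N x = Nat.min N k.
Proof.
  intros Hk N. induction N as [|N IH]; [reflexivity|].
  rewrite count_le_S, IH. destruct (Rle_dec (s (S N)) x) as [h|h].
  - apply Hk in h; lia.
  - assert (~ (S N <= k)%nat) by (intro h'; apply h, Hk; lia). lia.
Qed.

Lemma ncount_eq s x k :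
  (forall j, (1 <= j)%nat -> s j <= x <-> (j <= k)%nat) -> ncount s x = INR k.
Proof.
  intros Hk. unfold ncount. rewrite (is_sup_seq_unique _ (Finite (INR k))); [reflexivity|].
  intros eps. pose proof (cond_pos eps). split.
  - intros N. rewrite (count_le_eq_min s x k Hk). simpl.
    assert (INR (Nat.min N k) <= INR k) by (apply le_INR; lia). lra.
  - exists k. rewrite (count_le_eq_min s x k Hk), Nat.min_id. simpl. lra.
Qed.

Definition lhs_denom (u t : R) : R := t ^ 2 * (t ^ 2 + u ^ 2 + u * t * sqrt 2).

Definition lhs_density (s : nat -> R) (u t : R) : R := ncount s t / lhs_denom u t.

Lemma lhs_integralE s M u : lhs_integral s M u = u ^ 3 * RInt (lhs_density s u) 0 (s M).
Proof. reflexivity. Qed.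

Lemma lhs_denom_pos u t : 0 < u -> 0 < t -> 0 < lhs_denom u t.
Proof.
  intros hu ht. unfold lhs_denom. pose proof (sqrt_pos 2).
  assert (0 <= u * t * sqrt 2) by (apply Rmult_le_pos; nra).
  apply Rmult_lt_0_compat; nra.
Qed.

Lemma lhs_denom_le u t : 0 < t <= u -> lhs_denom u t <= 4 * u ^ 2 * t ^ 2.
Proof.
  intros ht. unfold lhs_denom. pose proof (sqrt_pos 2).
  assert (sqrt 2 < 2) by (apply sqrt_less; lra).
  assert (u * t * sqrt 2 <= u * u * 2)
    by (apply Rmult_le_compat; [nra | lra | apply Rmult_le_compat_l; lra | lra]).
  assert (t ^ 2 <= u ^ 2) by (apply pow_incr; lra).
  assert (0 <= t ^ 2) by nra.
  apply Rle_trans with (t ^ 2 * (4 * u ^ 2)); [apply Rmult_le_compat_l; nra | lra].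
Qed.

Lemma continuous_div_lhs_denom c u t : 0 < u -> 0 < t ->
  continuous (fun t => c / lhs_denom u t) t.
Proof.
  intros hu ht. apply (ex_derive_continuous (K := R_AbsRing) (V := R_NormedModule)).
  unfold lhs_denom. auto_derive. pose proof (lhs_denom_pos u t hu ht). unfold lhs_denom in *. lra.
Qed.

Section IncreasingUnbounded.

Variable s : nat -> R.
Hypothesis s_incr : forall j, (1 <= j)%nat -> s j < s (S j).
Hypothesis s_unbounded : forall x, exists N, x < s (S N).

Lemma s_le i j : (1 <= i)%nat -> (i <= j)%nat -> s i <= s j.
Proof.
  intros Hi Hij. induction Hij as [|j Hij IH]; [lra|].
  pose proof (s_incr j ltac:(lia)). lra.
Qed.

Lemma ncount_below x : x < s 1 -> ncount s x = 0.
Proof.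
  intros hx. apply (ncount_eq s x 0). intros j Hj. split; [|lia].
  intros hj. pose proof (s_le 1 j ltac:(lia) Hj). lra.
Qed.

Lemma ncount_between k x : (1 <= k)%nat -> s k <= x < s (S k) -> ncount s x = INR k.
Proof.
  intros Hk hx. apply ncount_eq. intros j Hj. split.
  - intros hj. destruct (Compare_dec.le_lt_dec j k) as [l|l]; [exact l|].
    pose proof (s_le (S k) j ltac:(lia) l). lra.
  - intros l. pose proof (s_le j k Hj l). lra.
Qed.

Lemma exists_between x : s 1 <= x -> exists k, (1 <= k)%nat /\ s k <= x < s (S k).
Proof.
  intros hx. destruct (s_unbounded x) as [N hN]. induction N as [|N IH]; [lra|].
  destruct (Rle_dec (s (S N)) x) as [l|l].
  - exists (S N). split; [lia|lra].
  - apply IH. lra.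
Qed.

Lemma ncount_nonneg x : 0 <= ncount s x.
Proof.
  destruct (Rlt_dec x (s 1)) as [l|l].
  - rewrite ncount_below by exact l. lra.
  - destruct (exists_between x ltac:(lra)) as [k [Hk hk]].
    rewrite (ncount_between k x Hk hk). apply pos_INR.
Qed.

Lemma ncount_ge x y : s 1 <= x -> (forall k, x < s (S k) -> y <= INR k) -> y <= ncount s x.
Proof.
  intros hx Hy. destruct (exists_between x hx) as [k [Hk hk]].
  rewrite (ncount_between k x Hk hk). apply Hy. apply hk.
Qed.

Hypothesis s1_pos : 0 < s 1.

Lemma lhs_density_nonneg u t : 0 < u -> 0 < t -> 0 <= lhs_density s u t.
Proof.
  intros hu ht. apply Rdiv_le_0_compat; [apply ncount_nonneg | apply lhs_denom_pos; lra].
Qed.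

(* The density vanishes on [0, s 1] and is continuous between consecutive terms. *)
Lemma ex_RInt_lhs_density u M : 0 < u -> (1 <= M)%nat -> ex_RInt (lhs_density s u) 0 (s M).
Proof.
  intros hu HM. induction HM as [|m Hm IH].
  - apply (ex_RInt_ext (fun _ => 0)); [|apply ex_RInt_const].
    intros x. rewrite Rmin_left, Rmax_right by lra. intros hx.
    unfold lhs_density. rewrite ncount_below by lra. unfold Rdiv. now rewrite Rmult_0_l.
  - apply ex_RInt_Chasles with (s m); [exact IH|].
    pose proof (s_incr m ltac:(lia)). pose proof (s_le 1 m ltac:(lia) Hm).
    apply (ex_RInt_ext (fun t => INR m / lhs_denom u t)).
    + intros x. rewrite Rmin_left, Rmax_right by lra. intros hx.
      unfold lhs_density. rewrite (ncount_between m x Hm) by lra. reflexivity.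
    + apply (ex_RInt_continuous (V := R_CompleteNormedModule)).
      intros t. rewrite Rmin_left, Rmax_right by lra. intros ht.
      apply continuous_div_lhs_denom; lra.
Qed.

Lemma is_RInt_le_RInt_lhs_density u M a b (h : R -> R) (I : R) :
  0 < u -> (1 <= M)%nat -> 0 <= a <= b -> b <= s M ->
  is_RInt h a b I -> (forall x, a < x < b -> h x <= lhs_density s u x) ->
  I <= RInt (lhs_density s u) 0 (s M).
Proof.
  intros hu HM hab hb hI hle.
  pose proof (ex_RInt_lhs_density u M hu HM) as E.
  assert (E0b : ex_RInt (lhs_density s u) 0 b)
    by (apply (ex_RInt_Chasles_1 (V := R_CompleteNormedModule)) with (s M); auto; lra).
  assert (EbM : ex_RInt (lhs_density s u) b (s M))
    by (apply (ex_RInt_Chasles_2 (V := R_CompleteNormedModule)) with 0; auto; lra).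
  assert (E0a : ex_RInt (lhs_density s u) 0 a)
    by (apply (ex_RInt_Chasles_1 (V := R_CompleteNormedModule)) with b; auto; lra).
  assert (Eab : ex_RInt (lhs_density s u) a b)
    by (apply (ex_RInt_Chasles_2 (V := R_CompleteNormedModule)) with 0; auto; lra).
  rewrite <- (RInt_Chasles (V := R_CompleteNormedModule) _ 0 b (s M)) by auto.
  rewrite <- (RInt_Chasles (V := R_CompleteNormedModule) _ 0 a b) by auto.
  assert (0 <= RInt (lhs_density s u) 0 a)
    by (apply RInt_ge_0; [lra | exact E0a | intros; apply lhs_density_nonneg; lra]).
  assert (0 <= RInt (lhs_density s u) b (s M))
    by (apply RInt_ge_0; [lra | exact EbM | intros; apply lhs_density_nonneg; lra]).
  assert (I <= RInt (lhs_density s u) a b)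
    by (apply (is_RInt_le h (lhs_density s u) a b); [lra | exact hI | exact (RInt_correct (V := R_CompleteNormedModule) _ _ _ Eab) | exact hle]).
  unfold plus; simpl. lra.
Qed.

Lemma lhs_integral_ge M u a b (g : R -> R) (I : R) :
  (1 <= M)%nat -> 0 < a <= b -> b <= s M -> b <= u ->
  is_RInt g a b I -> (forall x, a < x < b -> g x <= ncount s x / x ^ 2) ->
  u / 4 * I <= lhs_integral s M u.
Proof.
  intros HM hab hbM hbu hI Hg.
  assert (hu : 0 < u) by lra.
  assert (hlow : / (4 * u ^ 2) * I <= RInt (lhs_density s u) 0 (s M)).
  { apply (is_RInt_le_RInt_lhs_density u M a b (fun x => / (4 * u ^ 2) * g x));
      [exact hu | exact HM | lra | exact hbM
      | exact (is_RInt_scal (V := R_NormedModule) g a b _ I hI) |].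
    intros x hx. specialize (Hg x hx).
    pose proof (lhs_denom_le u x ltac:(lra)). pose proof (lhs_denom_pos u x hu ltac:(lra)).
    pose proof (ncount_nonneg x).
    apply Rle_trans with (ncount s x / (4 * u ^ 2 * x ^ 2)).
    - replace (ncount s x / (4 * u ^ 2 * x ^ 2)) with (/ (4 * u ^ 2) * (ncount s x / x ^ 2))
        by (field; lra).
      apply Rmult_le_compat_l; [|exact Hg]. left. apply Rinv_0_lt_compat. nra.
    - apply Rmult_le_compat_l; [exact (ncount_nonneg x)|]. apply Rinv_le_contravar; lra. }
  rewrite lhs_integralE.
  replace (u / 4 * I) with (u ^ 3 * (/ (4 * u ^ 2) * I)) by (field; lra).
  apply Rmult_le_compat_l; [|exact hlow]. left. apply pow_lt, hu.
Qed.

End IncreasingUnbounded.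

Lemma is_RInt_inv a b : 0 < a <= b -> is_RInt Rinv a b (ln b - ln a).
Proof.
  intros hab.
  apply (is_RInt_derive (V := R_CompleteNormedModule) ln Rinv);
    intros x; rewrite Rmin_left, Rmax_right by lra; intros hx.
  - auto_derive; [lra | field; lra].
  - apply (ex_derive_continuous (K := R_AbsRing) (V := R_NormedModule)). auto_derive. lra.
Qed.

Lemma shift_incr beta j : INR j + beta < INR (S j) + beta.
Proof. rewrite S_INR. lra. Qed.

Lemma shift_unbounded beta x : exists N, x < INR (S N) + beta.
Proof.
  destruct (INR_unbounded (x - beta)) as [N hN]. exists N. rewrite S_INR. lra.
Qed.

Lemma ncount_shift_ge beta x : -1 < beta -> 2 * (beta + 2) <= x ->
  x / 2 <= ncount (fun i => INR i + beta) x.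
Proof.
  intros hb hx. apply (ncount_ge (fun i => INR i + beta)).
  - intros j _. apply shift_incr.
  - apply shift_unbounded.
  - simpl. lra.
  - intros k hk. rewrite S_INR in hk. lra.
Qed.

Lemma lhs_integral_shift_ge : forall beta : R, -1 < beta ->
  let s := fun i : nat => INR i + beta in
  exists C D : R, 0 < C /\
    exists M0 : nat, forall (M : nat) (u : R), (M0 <= M)%nat -> D <= u ->
      lhs_integral s M u >= C * u * ln (Rmin (s M) u).
Proof.
  intros beta hb s.
  set (c := 2 * (beta + 2)).
  assert (hc : 2 < c) by (unfold c; lra).
  exists (1 / 16), (c * c). split; [lra|].
  destruct (shift_unbounded beta (c * c)) as [N hN].
  exists (S N). intros M u HM hu.
  assert (hsM : c * c <= s M) by (unfold s; pose proof (le_INR _ _ HM); lra).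
  set (m := Rmin (s M) u).
  assert (hcm : c * c <= m) by (apply Rmin_glb; lra).
  assert (hlog : is_RInt (fun x => / 2 * / x) c m (/ 2 * (ln m - ln c)))
    by (apply (is_RInt_scal (V := R_NormedModule)), is_RInt_inv; nra).
  assert (hlm : 2 * ln c <= ln m)
    by (replace (2 * ln c) with (ln (c * c)) by (rewrite ln_mult; lra); apply ln_le; nra).
  assert (hlow : u / 4 * (/ 2 * (ln m - ln c)) <= lhs_integral s M u).
  { apply (lhs_integral_ge s (fun j _ => shift_incr beta j) (shift_unbounded beta)
      ltac:(unfold s; simpl; lra) M u c m _ _ ltac:(lia) ltac:(nra) (Rmin_l _ _) (Rmin_r _ _) hlog).
    intros x hx.
    pose proof (ncount_shift_ge beta x hb (Rlt_le _ _ (proj1 hx))) as hn. fold s in hn.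
    apply Rle_trans with ((x / 2) / x ^ 2).
    - right. field. lra.
    - unfold Rdiv at 2. apply Rmult_le_compat_r; [|exact hn]. left. apply Rinv_0_lt_compat. nra. }
  assert (u * (2 * ln c) <= u * ln m) by (apply Rmult_le_compat_l; nra).
  nra.
Qed.

Lemma Rpower_pos x y : 0 < Rpower x y.
Proof. apply exp_pos. Qed.

Lemma Rpower_Rpower_inv a x : 0 < a -> 0 < x -> Rpower (Rpower x (/ a)) a = x.
Proof.
  intros ha hx. rewrite Rpower_mult, Rinv_l by lra. apply Rpower_1, hx.
Qed.

Lemma Rpower_inv_Rpower a x : 0 < a -> 0 < x -> Rpower (Rpower x a) (/ a) = x.
Proof.
  intros ha hx. rewrite Rpower_mult, Rinv_r by lra. apply Rpower_1, hx.
Qed.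

Lemma Rpower_inv_lt a x y : 0 < a -> 0 < x -> 0 < y -> x < Rpower y a -> Rpower x (/ a) < y.
Proof.
  intros ha hx hy hxy. destruct (Rlt_or_le (Rpower x (/ a)) y) as [l|l]; [exact l|].
  assert (hle : Rpower y a <= Rpower (Rpower x (/ a)) a) by (apply Rle_Rpower_l; lra).
  rewrite Rpower_Rpower_inv in hle by lra. lra.
Qed.

Lemma power_incr alpha j : 0 < alpha -> (1 <= j)%nat ->
  Rpower (INR j) alpha < Rpower (INR (S j)) alpha.
Proof.
  intros ha hj. apply Rlt_Rpower_l; [exact ha|]. split.
  - apply lt_0_INR. lia.
  - apply lt_INR. lia.
Qed.

Lemma power_unbounded alpha x : 0 < alpha -> exists N, x < Rpower (INR (S N)) alpha.
Proof.
  intros ha. pose proof (Rmax_l x 1) as hx. pose proof (Rmax_r x 1).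
  destruct (INR_unbounded (Rpower (Rmax x 1) (/ alpha))) as [N hN]. exists N.
  rewrite <- (Rpower_Rpower_inv alpha (Rmax x 1)) in hx by lra.
  assert (Rpower (Rpower (Rmax x 1) (/ alpha)) alpha < Rpower (INR (S N)) alpha).
  { apply Rlt_Rpower_l; [exact ha|]. split; [apply Rpower_pos | rewrite S_INR; lra]. }
  lra.
Qed.

Lemma ncount_power_ge alpha x : 0 < alpha -> Rpower 2 alpha <= x ->
  Rpower x (/ alpha) / 2 <= ncount (fun i => Rpower (INR i) alpha) x.
Proof.
  intros ha hx.
  assert (h1 : Rpower 1 alpha <= Rpower 2 alpha) by (apply Rle_Rpower_l; lra).
  assert (hx0 : 0 < x) by (pose proof (Rpower_pos 2 alpha); lra).
  assert (h2 : 2 <= Rpower x (/ alpha)).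
  { rewrite <- (Rpower_inv_Rpower alpha 2) by lra.
    apply Rle_Rpower_l; [left; apply Rinv_0_lt_compat, ha | split; [apply Rpower_pos | exact hx]]. }
  apply (ncount_ge (fun i => Rpower (INR i) alpha)).
  - intros j hj. apply power_incr; assumption.
  - intros y. apply power_unbounded, ha.
  - simpl. lra.
  - intros k hk. apply Rpower_inv_lt in hk; [|exact ha | exact hx0 | apply lt_0_INR; lia].
    rewrite S_INR in hk. lra.
Qed.

Lemma lhs_integral_power_ge : forall alpha : R, 0 < alpha < 1 ->
  let s := fun i : nat => Rpower (INR i) alpha in
  exists C D : R, 0 < C /\
    exists M0 : nat, forall (M : nat) (u : R), (M0 <= M)%nat -> D <= u ->
      lhs_integral s M u >= C * u * Rpower (Rmin (s M) u) (1 / alpha - 1).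
Proof.
  intros alpha ha s.
  replace (1 / alpha) with (/ alpha) by (unfold Rdiv; ring).
  set (K := Rpower 2 alpha).
  assert (hK : 1 < K) by (unfold K; rewrite <- (Rpower_O 2) by lra; apply Rpower_lt; lra).
  exists (Rpower (/ 2) (/ alpha) / 16), (2 * K).
  split; [pose proof (Rpower_pos (/ 2) (/ alpha)); lra|].
  destruct (power_unbounded alpha (2 * K) (proj1 ha)) as [N hN].
  exists (S N). intros M u HM hu.
  assert (hsM : 2 * K <= s M).
  { pose proof (s_le s (fun j hj => power_incr alpha j (proj1 ha) hj) (S N) M ltac:(lia) HM).
    unfold s in *. lra. }
  set (m := Rmin (s M) u).
  assert (hm : 2 * K <= m) by (apply Rmin_glb; lra).
  (* On [m/2, m], n(x) >= (m/2)^(1/alpha) / 2 and x <= m. *)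
  set (L := Rpower (m / 2) (/ alpha) / 2 / m ^ 2).
  assert (hlow : u / 4 * ((m - m / 2) * L) <= lhs_integral s M u).
  { apply (lhs_integral_ge s (fun j hj => power_incr alpha j (proj1 ha) hj)
      (fun x => power_unbounded alpha x (proj1 ha)) ltac:(apply Rpower_pos)
      M u (m / 2) m (fun _ => L) _ ltac:(lia) ltac:(lra) (Rmin_l _ _) (Rmin_r _ _)
      (is_RInt_const _ _ L)).
    intros x hx.
    pose proof (ncount_power_ge alpha x (proj1 ha) ltac:(unfold K in *; lra)) as hn. fold s in hn.
    assert (Rpower (m / 2) (/ alpha) <= Rpower x (/ alpha))
      by (apply Rle_Rpower_l; [left; apply Rinv_0_lt_compat; lra | lra]).
    pose proof (Rpower_pos (m / 2) (/ alpha)).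
    apply Rle_trans with (Rpower (m / 2) (/ alpha) / 2 / x ^ 2).
    - unfold L, Rdiv. apply Rmult_le_compat_l; [lra|].
      apply Rinv_le_contravar; [nra | apply pow_incr; lra].
    - unfold Rdiv. apply Rmult_le_compat_r; [left; apply Rinv_0_lt_compat; nra | unfold Rdiv in hn; lra]. }
  replace (Rpower (/ 2) (/ alpha) / 16 * u * Rpower m (/ alpha - 1))
    with (u / 4 * ((m - m / 2) * L)); [apply Rle_ge, hlow|].
  unfold L, Rminus. rewrite Rpower_plus, Rpower_Ropp, Rpower_1 by lra.
  change (m / 2) with (m * / 2). rewrite <- Rpower_mult_distr by lra.
  field. lra.
Qed.

Theorem lemma2p1 :
  (forall beta : R, -1 < beta ->
     let s := fun i : nat => INR i + beta in
     exists C D : R, 0 < C /\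
       exists M0 : nat, forall (M : nat) (u : R), (M0 <= M)%nat -> D <= u ->
         lhs_integral s M u >= C * u * ln (Rmin (s M) u))
  /\
  (forall alpha : R, 0 < alpha < 1 ->
     let s := fun i : nat => Rpower (INR i) alpha in
     exists C D : R, 0 < C /\
       exists M0 : nat, forall (M : nat) (u : R), (M0 <= M)%nat -> D <= u ->
         lhs_integral s M u >= C * u * Rpower (Rmin (s M) u) (1 / alpha - 1)).
Proof. split; [exact lhs_integral_shift_ge | exact lhs_integral_power_ge]. Qed.
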